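(* Let $m\in(1,2]$ and $U\in C^3(\mathbb{R}^d)$ such that there exists $A_1\ge0$ with $\|D^kU(q)\|\le A_1(\|q\|+1)^{m-k}$ for all $q$ and $k=2,3$, and there exist $A_2>0$, $R\ge0$ with $D^2U(q)\{\nabla U(q)\otimes\nabla U(q)\}\ge A_2\|q\|^{3m-4}$ for all $\|q\|\ge R$. Then there exist $R_0\ge0$ and $\delta,\eta>0$ such that for all $q,x,z\in\mathbb{R}^d$ with $\|q\|\ge R_0$ and $\max(\|q-x\|,\|q-z\|)\le\delta\|q\|$, $$D^2U(q)\{\nabla U(x)\otimes\nabla U(z)\}\ge\eta\|q\|^{3m-4}.$$
   Context: $D^kU$ is the $k$-th differential with operator norm; $D^2U(q)\{a\otimes b\}=\langle a,\nabla^2U(q)b\rangle$. *)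

From HB Require Import structures.
From mathcomp Require Import all_boot all_order all_algebra.
From mathcomp Require Import all_classical all_reals all_analysis.
Set Implicit Arguments. Unset Strict Implicit. Unset Printing Implicit Defensive.
Import Order.TTheory GRing.Theory Num.Theory.
Import numFieldNormedType.Exports.
Local Open Scope ring_scope.

Section Defs.
Variables (R : realType) (d : nat).
Implicit Types (f : 'rV[R]_d -> R) (a b c x : 'rV[R]_d).

Definition enorm x : R := Num.sqrt (\sum_(i < d) x ord0 i ^+ 2).

Definition basis (i : 'I_d) : 'rV[R]_d := delta_mx 0 i.

Definition partial (i : 'I_d) f : 'rV[R]_d -> R := fun x => 'D_(basis i) f x.

Definition C3 f : Prop :=
  (forall x, differentiable f x) /\
  (forall i x, differentiable (partial i f) x) /\
  (forall i j x, differentiable (partial i (partial j f)) x) /\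
  (forall i j k, continuous (partial i (partial j (partial k f)))).

Definition grad f x : 'rV[R]_d := \row_i partial i f x.

Definition D2 f x a b : R :=
  \sum_(i < d) \sum_(j < d) a ord0 i * partial i (partial j f) x * b ord0 j.

Definition D3 f x a b c : R :=
  \sum_(i < d) \sum_(j < d) \sum_(k < d)
     a ord0 i * b ord0 j * c ord0 k * partial i (partial j (partial k f)) x.

End Defs.

(* Write s = |q|.
   Along a segment the gradient moves by at most the Hessian bound times the
   length, which gives |grad U q| = O(s^(m-1)) and, since the segment from q to
   y stays at distance >= s/2 from 0 when |y - q| <= delta s <= s/2,
   |grad U y - grad U q| = O(delta s^(m-1)).  By bilinearity,
   D2 U q (grad U x) (grad U z) differs from D2 U q (grad U q) (grad U q) by two
   Hessian terms each containing a gradient increment, hence by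
   O(delta s^(m-2) s^(m-1) s^(m-1)) = O(delta s^(3m-4)); for delta small this
   is at most half the lower bound A2 s^(3m-4). *)

From HB Require Import structures.
From mathcomp Require Import all_boot all_order all_algebra.
From mathcomp Require Import all_classical all_reals all_analysis.
From mathcomp Require Import ring lra.
Import Order.TTheory GRing.Theory Num.Theory.
Import numFieldNormedType.Exports.
Local Open Scope ring_scope.
Set Implicit Arguments. Unset Strict Implicit.

Section EuclideanNorm.
Variables (R : realType) (d : nat).
Implicit Types (a b : 'rV[R]_d).

Definition dot a b : R := \sum_(i < d) a ord0 i * b ord0 i.

Lemma enorm_ge0 a : 0 <= enorm a.
Proof. exact: sqrtr_ge0. Qed.

Lemma sqr_enorm a : enorm a ^+ 2 = dot a a.
Proof.
rewrite /enorm sqr_sqrtr; last by apply: sumr_ge0 => i _; rewrite sqr_ge0.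
by apply: eq_bigr => i _; rewrite expr2.
Qed.

Lemma enorm_eq0 a : enorm a = 0 -> a = 0.
Proof.
move=> a0; apply/rowP => i; rewrite mxE; apply/eqP; rewrite -sqrf_eq0.
have sqr_coord_ge0 j : true -> 0 <= a ord0 j ^+ 2 by rewrite sqr_ge0.
have /psumr_eq0P-> // : \sum_(j < d) a ord0 j ^+ 2 = 0.
by rewrite -[LHS]sqr_sqrtr ?sumr_ge0 // -/(enorm a) a0 expr0n.
Qed.

Lemma dot_le_enorm a b : dot a b <= enorm a * enorm b.
Proof.
have [/enorm_eq0->|a0] := eqVneq (enorm a) 0.
  by rewrite /dot big1 ?mulr_ge0 ?enorm_ge0 // => i _; rewrite mxE mul0r.
have [/enorm_eq0->|b0] := eqVneq (enorm b) 0.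
  by rewrite /dot big1 ?mulr_ge0 ?enorm_ge0 // => i _; rewrite mxE mulr0.
set A := enorm a; set B := enorm b.
have AB0 : 0 < A * B by rewrite mulr_gt0 // lt0r ?a0 ?b0 ?enorm_ge0.
(* Expanding [0 <= |B a - A b|^2] gives [0 <= 2 A B (A B - dot a b)]. *)
have : 0 <= \sum_(i < d) (B * a ord0 i - A * b ord0 i) ^+ 2.
  by apply: sumr_ge0 => i _; rewrite sqr_ge0.
have -> : \sum_(i < d) (B * a ord0 i - A * b ord0 i) ^+ 2
    = B ^+ 2 * dot a a + A ^+ 2 * dot b b - 2 * (A * B) * dot a b.
  rewrite /dot !mulr_sumr -!big_split /= -sumrB; apply: eq_bigr => i _; ring.
rewrite -!sqr_enorm -/A -/B => ge0.
have : 2 * (A * B) * dot a b <= 2 * (A * B) * (A * B) by nra.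
by rewrite ler_pM2l // mulr_gt0.
Qed.

Lemma enormD a b : enorm (a + b) <= enorm a + enorm b.
Proof.
rewrite -(ler_pXn2r (isT : (0 < 2)%N)) ?nnegrE ?addr_ge0 ?enorm_ge0 //.
have -> : enorm (a + b) ^+ 2 = enorm a ^+ 2 + 2 * dot a b + enorm b ^+ 2.
  rewrite !sqr_enorm /dot mulr_sumr -!big_split /=; apply: eq_bigr => i _.
  rewrite !mxE; ring.
have := dot_le_enorm a b; nra.
Qed.

Lemma enormZ (k : R) a : enorm (k *: a) = `|k| * enorm a.
Proof.
rewrite /enorm -sqrtr_sqr -sqrtrM ?sqr_ge0 // mulr_sumr; congr Num.sqrt.
by apply: eq_bigr => i _; rewrite !mxE exprMn.
Qed.

Lemma enormN a : enorm (- a) = enorm a.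
Proof. by rewrite -scaleN1r enormZ normrN normr1 mul1r. Qed.

Lemma enormB a b : enorm (a - b) = enorm (b - a).
Proof. by rewrite -enormN opprB. Qed.

End EuclideanNorm.

Lemma le0_ger_powR (R : realType) (x y r : R) :
  r <= 0 -> 0 < x -> x <= y -> y `^ r <= x `^ r.
Proof.
move=> r0 x0 xy; have y0 : 0 < y by apply: lt_le_trans xy.
rewrite -(opprK r) (powRN x) (powRN y) lef_pV2 ?posrE ?powR_gt0 //.
have Nr0 : 0 <= - r by rewrite oppr_ge0.
by apply: (ge0_ler_powR Nr0); rewrite ?nnegrE ?(ltW x0) ?(ltW y0).
Qed.

Lemma ler_of_sqr_le_mul (R : realDomainType) (x c : R) :
  0 <= c -> x ^+ 2 <= c * x -> x <= c.
Proof. by move=> c0 xc; nra. Qed.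

Section LineDerivative.
Variable R : realType.

Lemma is_derive_line (V : normedModType R) (f : V -> R) (p v : V) (t : R) :
  derivable f (p + t *: v) v ->
  is_derive t 1 (fun s => f (p + s *: v)) ('D_v f (p + t *: v)).
Proof.
have quotE : (fun h : R => h^-1 *: (((fun s => f (p + s *: v)) \o shift t) (h *: 1)
                                 - f (p + t *: v)))
    = (fun h : R => h^-1 *: ((f \o shift (p + t *: v)) (h *: v) - f (p + t *: v))).
  apply: funext => h /=; congr (_ *: (f _ - _)).
  by rewrite /shift [_%:A]mulr1 scalerDl addrCA addrA.
by move=> fv; apply: DeriveDef; rewrite /derivable /derive /= quotE.
Qed.

Lemma is_derive_powR_affine (a r t : R) : 0 < 1 + t * a ->
  is_derive t 1 (fun s => (1 + s * a) `^ r) (a * (r * (1 + t * a) `^ (r - 1))).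
Proof.
move=> pos.
have dP : differentiable (fun x : R => x `^ r) (1 + t * a).
  by apply/derivable1_diffP; apply: derivable_powR; rewrite in_itv /= andbT.
apply: is_derive_eq.
  apply: (@is_derive_line R^o (fun x : R => x `^ r) 1 a t); exact: diff_derivable.
rewrite deriveE // -[X in 'd _ _ X]mulr1 -[a * 1]/(a *: (1 : R)) linearZ /=.
by rewrite -deriveE //; have [_ ->] := is_derive1_powR r pos.
Qed.

Lemma ler_increment_of_ler_derive (f g f' g' : R -> R) :
  {in `[0, 1], forall t : R, is_derive t 1 f (f' t)} ->
  {in `[0, 1], forall t : R, is_derive t 1 g (g' t)} ->
  {in `]0, 1[, forall t : R, f' t <= g' t} ->
  f 1 - f 0 <= g 1 - g 0.
Proof.
move=> df dg f'g'.
have dfg : {in `[0, 1], forall t : R, is_derive t 1 (f - g) (f' t - g' t)}.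
  by move=> t t01; apply: is_deriveB; [exact: df | exact: dg].
have [c c01] := MVT ltr01 (fun t t01 => dfg t (subset_itv_oo_cc t01))
  (derivable_within_continuous (fun t t01 => @ex_derive _ _ _ _ _ _ _ (dfg t t01))).
rewrite !fctE subr0 mulr1; have := f'g' c c01; lra.
Qed.

End LineDerivative.

Lemma derive_sum_partial (R : realType) (d : nat) (f : 'rV[R]_d -> R) (y v : 'rV[R]_d) :
  differentiable f y -> 'D_v f y = \sum_(i < d) v ord0 i * partial i f y.
Proof.
move=> df; rewrite deriveE // {1}(row_sum_delta v) linear_sum.
by apply: eq_bigr => i _; rewrite linearZ /= /partial deriveE.
Qed.

Lemma D2_split (R : realType) (d : nat) (f : 'rV[R]_d -> R) (q a b c : 'rV[R]_d) :
  D2 f q a b = D2 f q c c + D2 f q (a - c) b + D2 f q c (b - c).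
Proof.
rewrite /D2 -!big_split /=; apply: eq_bigr => i _.
by rewrite -!big_split /=; apply: eq_bigr => j _; rewrite !mxE; ring.
Qed.

Section GradientIncrement.
Variables (R : realType) (d : nat) (U : 'rV[R]_d -> R).
Hypothesis dU : forall j x, differentiable (partial j U) x.

Lemma is_derive_dot_grad (w p v : 'rV[R]_d) (t : R) :
  is_derive t 1 (fun s => dot w (grad U (p + s *: v))) (D2 U (p + t *: v) v w).
Proof.
have -> : (fun s => dot w (grad U (p + s *: v)))
    = \sum_(j < d) (w ord0 j \*: (fun s => partial j U (p + s *: v))).
  by apply: funext => s; rewrite /dot fct_sumE; apply: eq_bigr => j _; rewrite mxE.
apply: is_derive_eq.
  apply: is_derive_sum => j; apply: is_deriveZ.
  by apply: is_derive_line; exact: diff_derivable.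
rewrite /D2 exchange_big /=; apply: eq_bigr => j _.
rewrite derive_sum_partial // [_ *: _]mulr_sumr; apply: eq_bigr => i _.
by rewrite mulrC.
Qed.

(* [s |-> <w, grad U (p + s v)>] has derivative [D2 U (p + s v) v w], and for
   [w] the increment of the gradient it increases by [|w|^2] on [0, 1]. *)
Lemma sqr_enorm_grad_increment_le (p v : 'rV[R]_d) (G G' : R -> R) :
  {in `[0, 1], forall t : R, is_derive t 1 G (G' t)} ->
  {in `]0, 1[, forall t : R,
     D2 U (p + t *: v) v (grad U (p + v) - grad U p) <= G' t} ->
  enorm (grad U (p + v) - grad U p) ^+ 2 <= G 1 - G 0.
Proof.
set w := grad U (p + v) - grad U p => dG D2G.
have -> : enorm w ^+ 2 = dot w (grad U (p + 1 *: v)) - dot w (grad U (p + 0 *: v)).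
  rewrite sqr_enorm scale1r scale0r addr0 /dot -sumrB.
  by apply: eq_bigr => j _; rewrite !mxE mulrBr.
apply: (ler_increment_of_ler_derive
  (f := fun s => dot w (grad U (p + s *: v))) (g := G) _ dG D2G).
by move=> t _; exact: is_derive_dot_grad.
Qed.

End GradientIncrement.

Section HessianGrowth.
Variables (R : realType) (d : nat) (U : 'rV[R]_d -> R) (m A1 : R).
Hypothesis dU : forall j x, differentiable (partial j U) x.
Hypothesis m_gt1 : 1 < m.
Hypothesis m_le2 : m <= 2.
Hypothesis A1_ge0 : 0 <= A1.
Hypothesis D2_bound : forall q a b : 'rV[R]_d,
  `|D2 U q a b| <= A1 * (enorm q + 1) `^ (m - 2) * enorm a * enorm b.

Lemma enorm_grad_increment_le (p v : 'rV[R]_d) (L : R) : 0 <= L ->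
  {in `]0, 1[, forall t : R, (enorm (p + t *: v) + 1) `^ (m - 2) <= L} ->
  enorm (grad U (p + v) - grad U p) <= A1 * L * enorm v.
Proof.
set w := grad U (p + v) - grad U p => L0 powL.
have ALv0 : 0 <= A1 * L * enorm v by rewrite !mulr_ge0 ?enorm_ge0.
apply: ler_of_sqr_le_mul => //.
set c := A1 * L * enorm v * enorm w.
have -> : c = ( *%R c) 1 - ( *%R c) 0 by rewrite /= mulr1 mulr0 subr0.
apply: (@sqr_enorm_grad_increment_le _ _ U dU p v ( *%R c) (fun=> c))
  => // [t _|t /powL powtL].
  by apply: is_derive_eq; rewrite [_%:A]mulr1.
apply: le_trans (ler_norm _) _; apply: le_trans (D2_bound _ _ _) _.
by rewrite /c -!mulrA ler_wpM2l // ler_wpM2r // mulr_ge0 ?enorm_ge0.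
Qed.

Lemma enorm_grad_sub_grad0_le (q : 'rV[R]_d) :
  enorm (grad U q - grad U 0) <= A1 / (m - 1) * (1 + enorm q) `^ (m - 1).
Proof.
set w := grad U q - grad U 0; set a := enorm q; have a0 : 0 <= a := enorm_ge0 q.
have m10 : 0 < m - 1 by rewrite subr_gt0.
have Cq0 : 0 <= A1 / (m - 1) * (1 + a) `^ (m - 1).
  by rewrite mulr_ge0 ?divr_ge0 ?powR_ge0 ?(ltW m10).
apply: ler_of_sqr_le_mul => //.
(* Compare with [K (1 + s a)^(m-1)], whose derivative is the Hessian bound
   along [0, q]. *)
set K := A1 / (m - 1) * enorm w.
have K0 : 0 <= K by rewrite mulr_ge0 ?divr_ge0 ?enorm_ge0 ?(ltW m10).
pose G := K \*: (fun s : R => (1 + s * a) `^ (m - 1)).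
have : enorm w ^+ 2 <= G 1 - G 0.
  have -> : w = grad U (0 + q) - grad U 0 by rewrite add0r.
  apply: (@sqr_enorm_grad_increment_le _ _ U dU 0 q G
    (fun t => K * (a * ((m - 1) * (1 + t * a) `^ (m - 1 - 1))))) => t.
    rewrite in_itv /= => /andP[t0 _]; apply: is_deriveZ; apply: is_derive_powR_affine.
    by rewrite ltr_pwDl ?mulr_ge0.
  rewrite in_itv /= => /andP[/ltW t0 _].
  apply: le_trans (ler_norm _) _; apply: le_trans (D2_bound _ _ _) _.
  rewrite !add0r -/w enormZ ger0_norm // -/a [1 + _]addrC.
  have -> : m - 1 - 1 = m - 2 by ring.
  suff -> : K * (a * ((m - 1) * (t * a + 1) `^ (m - 2)))
          = A1 * (t * a + 1) `^ (m - 2) * a * enorm w by [].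
  by rewrite /K; field; rewrite gt_eqF.
rewrite /G /= mul0r addr0 powR1 mul1r [_%:A]mulr1 -[K *: _]/(K * _).
have -> : A1 / (m - 1) * (1 + a) `^ (m - 1) * enorm w = K * (1 + a) `^ (m - 1).
  by rewrite /K; ring.
lra.
Qed.

Lemma normD2_le (q a b : 'rV[R]_d) (alpha beta : R) : 0 < enorm q ->
  enorm a <= alpha -> enorm b <= beta ->
  `|D2 U q a b| <= A1 * enorm q `^ (m - 2) * alpha * beta.
Proof.
move=> q0 a_le b_le; apply: le_trans (D2_bound q a b) _.
have pow_le : (enorm q + 1) `^ (m - 2) <= enorm q `^ (m - 2).
  by apply: le0_ger_powR; rewrite ?subr_le0 ?lerDl.
apply: ler_pM; rewrite ?enorm_ge0 ?mulr_ge0 ?powR_ge0 ?enorm_ge0 //.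
apply: ler_pM; rewrite ?enorm_ge0 ?mulr_ge0 ?powR_ge0 //.
exact: ler_wpM2l.
Qed.

Lemma enorm_grad_le : exists2 C : R, 0 <= C &
  forall q : 'rV[R]_d, 1 <= enorm q -> enorm (grad U q) <= C * enorm q `^ (m - 1).
Proof.
have m10 : 0 <= m - 1 by rewrite subr_ge0 ltW.
have A1m0 : 0 <= A1 / (m - 1) by rewrite divr_ge0.
exists (2 * (A1 / (m - 1)) + enorm (grad U 0)).
  by apply: addr_ge0; [exact: mulr_ge0 | exact: enorm_ge0].
move=> q q1; set s := enorm q in q1 *; set P := s `^ (m - 1).
have s0 : 0 <= s by apply: le_trans q1.
have P1 : 1 <= P by rewrite -(powRr0 s) ler_powR.
have pow_le : (1 + s) `^ (m - 1) <= 2 * P.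
  apply: (@le_trans _ _ ((2 * s) `^ (m - 1))).
    by apply: ge0_ler_powR => //; rewrite ?nnegrE; lra.
  by rewrite powRM // ler_wpM2r ?powR_ge0 // ler1_powR // ?ler1n // lerBlDr.
have tri := enormD (grad U q - grad U 0) (grad U 0); rewrite subrK in tri.
apply: (le_trans tri); rewrite mulrDl -mulrA mulrCA.
apply: lerD; last by rewrite ler_peMr ?enorm_ge0.
exact: le_trans (enorm_grad_sub_grad0_le q) (ler_wpM2l A1m0 pow_le).
Qed.

Lemma enorm_grad_sub_le (q y : 'rV[R]_d) (delta : R) :
  1 <= enorm q -> 0 <= delta <= 2^-1 -> enorm (q - y) <= delta * enorm q ->
  enorm (grad U y - grad U q) <= 2 * A1 * delta * enorm q `^ (m - 1).
Proof.
set s := enorm q => s1 /andP[delta0 delta_le] qy.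
have s0 : 0 < s by apply: lt_le_trans s1.
have pow_half : (s / 2) `^ (m - 2) <= 2 * s `^ (m - 2).
  rewrite powRM ?invr_ge0 ?(ltW s0) // mulrC ler_pM2r ?powR_gt0 //.
  have half01 : 0 < (2 : R)^-1 <= 1 by apply/andP; split; lra.
  have := @ger_powR R 2^-1 half01 (- 1) (m - 2).
  by rewrite powR_inv1 ?invrK ?invr_ge0 //; apply; move: m_gt1; lra.
have incr :
    enorm (grad U y - grad U q) <= A1 * (2 * s `^ (m - 2)) * enorm (y - q).
  rewrite -{1}(subrK q y) [y - q + q]addrC; apply: enorm_grad_increment_le.
    by rewrite mulr_ge0 ?powR_ge0.
  move=> t; rewrite in_itv /= => /andP[/ltW t0 /ltW t1].
  apply: le_trans pow_half; apply: le0_ger_powR; rewrite ?subr_le0 ?divr_gt0 //.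
  (* [s <= |q + t (y - q)| + t |y - q|] and [t |y - q| <= s / 2] *)
  have := enormD (q + t *: (y - q)) (- (t *: (y - q))).
  rewrite addrK enormN enormZ ger0_norm // -/s enormB.
  have : t * enorm (q - y) <= 2^-1 * s.
    apply: le_trans (ler_wpM2r (ltW s0) delta_le).
    by apply: le_trans qy; rewrite ler_piMl ?enorm_ge0.
  have := enorm_ge0 (q + t *: (y - q)); lra.
apply: (le_trans incr); rewrite enormB.
have -> : m - 1 = m - 2 + 1 by ring.
rewrite [s `^ (m - 2 + 1)]powRD ?(gt_eqF s0) ?implybT // powRr1 ?(ltW s0) //.
have -> : 2 * A1 * delta * (s `^ (m - 2) * s) = A1 * (2 * s `^ (m - 2)) * (delta * s).
  by ring.
apply: ler_wpM2l qy; by rewrite mulr_ge0 // mulr_ge0 ?powR_ge0.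
Qed.

Lemma D2_grad_sub_le : exists2 K : R, 0 <= K &
  forall (delta : R) (q x z : 'rV[R]_d), 0 <= delta <= 2^-1 -> 1 <= enorm q ->
    enorm (q - x) <= delta * enorm q -> enorm (q - z) <= delta * enorm q ->
    D2 U q (grad U q) (grad U q) - D2 U q (grad U x) (grad U z)
      <= delta * K * enorm q `^ (3 * m - 4).
Proof.
have [C C0 grad_le] := enorm_grad_le.
exists (2 * A1 ^+ 2 * (2 * C + A1)); first by rewrite !mulr_ge0 ?addr_ge0 ?mulr_ge0.
move=> delta q x z delta_itv q1 qx qz; have /andP[delta0 delta_le] := delta_itv.
have s0 : 0 < enorm q by apply: lt_le_trans q1.
have gq := grad_le q q1.
have dx := enorm_grad_sub_le q1 delta_itv qx.
have dz := enorm_grad_sub_le q1 delta_itv qz.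
set s := enorm q in s0 gq dx dz *; set P := s `^ (m - 1) in gq dx dz *.
set E := 2 * A1 * delta in dx dz *.
have E0 : 0 <= E by rewrite !mulr_ge0.
have E_le : E <= A1 by have := ler_wpM2l A1_ge0 delta_le; rewrite /E; lra.
have gz : enorm (grad U z) <= (C + E) * P.
  have := enormD (grad U z - grad U q) (grad U q); rewrite subrK => /le_trans-> //.
  by rewrite mulrDl addrC lerD.
move: (normD2_le s0 dx gz) (normD2_le s0 gq dz); rewrite !ler_norml.
move=> /andP[e1 _] /andP[e2 _].
set S := s `^ (m - 2) * P * P.
have -> : s `^ (3 * m - 4) = S.
  rewrite /S /P (_ : 3 * m - 4 = m - 2 + (m - 1) + (m - 1)); last by ring.
  by rewrite !powRD ?(gt_eqF s0) ?implybT.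
have S0 : 0 <= S by rewrite !mulr_ge0 ?powR_ge0.
have coef : A1 * E * (2 * C + E) <= delta * (2 * A1 ^+ 2 * (2 * C + A1)).
  have -> : delta * (2 * A1 ^+ 2 * (2 * C + A1)) = A1 * E * (2 * C + A1).
    by rewrite /E; ring.
  by rewrite ler_wpM2l ?mulr_ge0 // lerD2l.
have sum_bounds : A1 * s `^ (m - 2) * (E * P) * ((C + E) * P)
    + A1 * s `^ (m - 2) * (C * P) * (E * P) = A1 * E * (2 * C + E) * S.
  by rewrite /S; ring.
have := ler_wpM2r S0 coef.
rewrite (D2_split U q (grad U x) (grad U z) (grad U q)) -sum_bounds in e1 e2 *.
lra.
Qed.

End HessianGrowth.

Unset Implicit Arguments.

Theorem lemma14 (R : realType) (d : nat) (m : R) (U : 'rV[R]_d -> R) :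
  1 < m <= 2 ->
  C3 U ->
  (exists A1 : R, 0 <= A1 /\
     (forall q a b : 'rV[R]_d,
        `|D2 U q a b| <= A1 * (enorm q + 1) `^ (m - 2) * enorm a * enorm b) /\
     (forall q a b c : 'rV[R]_d,
        `|D3 U q a b c| <=
          A1 * (enorm q + 1) `^ (m - 3) * enorm a * enorm b * enorm c)) ->
  (exists A2 Rr : R, 0 < A2 /\ 0 <= Rr /\
     forall q : 'rV[R]_d, Rr <= enorm q ->
       D2 U q (grad U q) (grad U q) >= A2 * enorm q `^ (3 * m - 4)) ->
  exists R0 delta eta : R, 0 <= R0 /\ 0 < delta /\ 0 < eta /\
    forall q x z : 'rV[R]_d, R0 <= enorm q ->
      Num.max (enorm (q - x)) (enorm (q - z)) <= delta * enorm q ->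
      D2 U q (grad U x) (grad U z) >= eta * enorm q `^ (3 * m - 4).
Proof.
move=> /andP[m_gt1 m_le2] [_ [dU _]] [A1 [A1_ge0 [D2_bound _]]].
move=> [A2 [Rr [A2_gt0 [Rr_ge0 D2_grad_ge]]]].
have [K K0 D2_sub] := D2_grad_sub_le dU m_gt1 m_le2 A1_ge0 D2_bound.
have K1_gt0 : 0 < 2 * (K + 1) by rewrite mulr_gt0 // ltr_wpDl.
set delta := Num.min 2^-1 (A2 / (2 * (K + 1))).
have delta_gt0 : 0 < delta by rewrite lt_min invr_gt0 ltr0n divr_gt0.
have deltaK : delta * K <= A2 / 2.
  have : delta <= A2 / (2 * (K + 1)) by rewrite ge_min lexx orbT.
  rewrite ler_pdivlMr // => le_A2; nra.
exists (Num.max Rr 1), delta, (A2 / 2).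
split; first by rewrite le_max Rr_ge0.
do 2!split => //; first by rewrite divr_gt0.
move=> q x z; rewrite ge_max => /andP[Rr_q q1]; rewrite ge_max => /andP[qx qz].
have delta_itv : 0 <= delta <= 2^-1 by rewrite ltW // ge_min lexx.
have := D2_sub delta q x z delta_itv q1 qx qz.
have := D2_grad_ge q Rr_q.
have := ler_wpM2r (powR_ge0 (enorm q) (3 * m - 4)) deltaK; lra.
Qed.
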